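(* Let $X$ be a union of conjugacy classes of a group, regarded as a rack under conjugation, $q$ a two-cocycle on $X$, and $V$ the Yetter–Drinfeld realization of $(X,q)$ over $\Bbbk G_X$. If $X$ is not braided, then there is a left coideal subalgebra of $\mathcal B(V)$ in the category of $\mathbb N_0$-graded $\Bbbk G_X$-comodules that can be extended in degree two.
   Context: $\Bbbk$ algebraically closed of characteristic $0$. A rack is a set with $\triangleright$ such that left multiplications are bijective and $x\triangleright(y\triangleright z)=(x\triangleright y)\triangleright(x\triangleright z)$. It is braided if $x\triangleright x=x$ for all $x$ and for all $x,y$ either $x\triangleright y=y$ or $x\triangleright(y\triangleright x)=y$. A two-cocycle is $q:X\times X\to\Bbbk^\times$ with $q_{x\triangleright y,x\triangleright z}q_{x,z}=q_{x,y\triangleright z}q_{y,z}$. $G_X=\langle g_x\mid g_xg_y=g_{x\triangleright y}g_x\rangle$. The realization is $V=\Bbbk X$ with basis $v_x$, $\deg v_x=g_x$, $g_x\cdot v_y=q_{x,y}v_{x\triangleright y}$ (braiding $c_q(v_x\otimes v_y)=q_{x,y}v_{x\triangleright y}\otimes v_x$). $\mathcal B(V)$ is its Nichols algebra. A left coideal subalgebra in the category of $\mathbb N_0$-graded $\Bbbk G_X$-comodules is an $\mathbb N_0$-graded, $G_X$-graded subalgebra $C\ni1$ with $\Delta(C)\subseteq\mathcal B(V)\otimes C$; it can be extended in degree $n$ if some $x\in\mathcal B(V)(n)\setminus C$ makes $\langle C,x\rangle$ again such a left coideal subalgebra. *)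

From HB Require Import structures.
From mathcomp Require Import all_boot all_algebra.
From mathcomp Require Import monoid.
From mathcomp Require Import finmap.
From mathcomp.multinomials Require Import monalg.

Set Implicit Arguments.
Unset Strict Implicit.
Unset Printing Implicit Defensive.

Import GRing.Theory.
Local Open Scope ring_scope.

Section Racks.
Variable X : Type.
Variable tr : X -> X -> X.

Definition braided_rack : Prop :=
  (forall x, tr x x = x) /\
  (forall x y, tr x y = y \/ tr x (tr y x) = y).

Definition two_cocycle (k : fieldType) (q : X -> X -> k) : Prop :=
  (forall x y, q x y != 0) /\
  (forall x y z, q (tr x y) (tr x z) * q x z = q x (tr y z) * q y z).

(* Equality of the images of two words in the enveloping group
   G_X = < g_x | g_x g_y = g_{x|>y} g_x >, via its universal property:
   two words are equal in G_X iff they have equal images in every group H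
   under every map phi : X -> H satisfying the defining relations. *)
Definition GX_eq (w w' : seq X) : Prop :=
  forall (H : Type) (m : H -> H -> H) (e : H) (i : H -> H),
    associative m -> left_id e m -> right_id e m ->
    left_inverse e i m -> right_inverse e i m ->
    forall phi : X -> H,
      (forall x y, m (phi x) (phi y) = m (phi (tr x y)) (phi x)) ->
      foldr m e (map phi w) = foldr m e (map phi w').
End Racks.

Definition conj_closed (G : groupType) (Xp : pred G) : Prop :=
  forall g x : G, Xp x -> Xp (x ^ g)%g.

Definition crack (G : groupType) (Xp : pred G) := {x : G | Xp x}.

(* x |> y = x y x^-1  (MathComp: y ^ z = z^-1 y z) *)
Definition ctr (G : groupType) (Xp : pred G) (hX : conj_closed Xp)
  (x y : crack Xp) : crack Xp :=
  exist _ (sval y ^ (sval x)^-1)%g (hX _ _ (proj2_sig y)).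

(* The Nichols algebra B(V) of V = kX with braiding                    *)
(*   c(v_x (x) v_y) = q_{x,y} v_{x|>y} (x) v_x,                          *)
(* realized (Rosso/Schauenburg) as the subalgebra generated by V of the *)
(* quantum shuffle algebra T^c(V); its coproduct is deconcatenation.   *)
(* T(V) = finitely supported k-valued functions on words (seq X); the  *)
(* word [:: x1; ...; xn] stands for v_x1 (x) ... (x) v_xn.              *)
Section Nichols.
Variable k : fieldType.
Variable X : choiceType.
Variable tr : X -> X -> X.
Variable q : X -> X -> k.

Definition TV := {malg k[seq X]}.

Definition vw (w : seq X) : TV := << w >>.

(* scalar by which g_a acts on the word w (the word becomes map (tr a) w) *)
Definition qw (a : X) (w : seq X) : k := \prod_(y <- w) q a y.

Definition rapp (a : X) (t : TV) : TV :=
  \sum_(w <- msupp t) t@_w *: vw (rcons w a).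

(* quantum shuffle of two words, given reversed:
   S(u'a (x) w'b) = S(u' (x) g_a.(w'b)) (x) a + S(u'a (x) w') (x) b *)
Fixpoint shr (ru : seq X) : seq X -> TV :=
  match ru with
  | [::] => fun rw => vw (rev rw)
  | a :: ru' =>
      fix inner (rw : seq X) : TV :=
        match rw with
        | [::] => vw (rev ru)
        | b :: rw' =>
            qw a rw *: rapp a (shr ru' (map (tr a) rw)) + rapp b (inner rw')
        end
  end.

Definition shw (u w : seq X) : TV := shr (rev u) (rev w).

Definition shuf (s t : TV) : TV :=
  \sum_(u <- msupp s) \sum_(w <- msupp t) (s@_u * t@_w) *: shw u w.

Inductive nichols : TV -> Prop :=
  | nich_one : nichols (vw [::])
  | nich_gen x : nichols (vw [:: x])
  | nich_add s t : nichols s -> nichols t -> nichols (s + t)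
  | nich_scale (a : k) s : nichols s -> nichols (a *: s)
  | nich_mul s t : nichols s -> nichols t -> nichols (shuf s t).

Inductive gen_subalg (C : TV -> Prop) (x : TV) : TV -> Prop :=
  | gen_in c : C c -> gen_subalg C x c
  | gen_x : gen_subalg C x x
  | gen_one : gen_subalg C x (vw [::])
  | gen_add s t : gen_subalg C x s -> gen_subalg C x t -> gen_subalg C x (s + t)
  | gen_scale (a : k) s : gen_subalg C x s -> gen_subalg C x (a *: s)
  | gen_mul s t : gen_subalg C x s -> gen_subalg C x t ->
                  gen_subalg C x (shuf s t).

Definition homog (n : nat) (t : TV) : Prop :=
  forall w, size w != n -> t@_w = 0.

Definition N0_graded (C : TV -> Prop) : Prop :=
  forall c, C c -> forall n, exists d, C d /\
    forall w, d@_w = if size w == n then c@_w else 0.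

(* C is G_X-graded (deg v_x = g_x): contains the G_X-homogeneous
   components of its elements *)
Definition GX_graded (C : TV -> Prop) : Prop :=
  forall c, C c -> forall w0 : seq X, exists d, C d /\
    forall w, (GX_eq tr w0 w -> d@_w = c@_w) /\
              (~ GX_eq tr w0 w -> d@_w = 0).

(* Delta(C) <= B(V) (x) C, with Delta the deconcatenation coproduct:
   the coefficient of (w1, w2) in Delta(c) is c@_(w1 ++ w2). *)
Definition left_coideal (C : TV -> Prop) : Prop :=
  forall c, C c -> exists s : seq (TV * TV),
    (forall p, p \in s -> nichols p.1 /\ C p.2) /\
    forall w1 w2, c@_(w1 ++ w2) = \sum_(p <- s) p.1@_w1 * p.2@_w2.

Definition lcsa (C : TV -> Prop) : Prop :=
  (forall c, C c -> nichols c) /\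
  C (vw [::]) /\
  (forall s t, C s -> C t -> C (s + t)) /\
  (forall (a : k) s, C s -> C (a *: s)) /\
  (forall s t, C s -> C t -> C (shuf s t)) /\
  N0_graded C /\ GX_graded C /\ left_coideal C.

Definition extendable_in_degree (C : TV -> Prop) (n : nat) : Prop :=
  exists x, [/\ nichols x, homog n x, ~ C x & lcsa (gen_subalg C x)].

End Nichols.

From Pilot Require Import Defs.
From HB Require Import structures.
From mathcomp Require Import all_boot all_algebra.
From mathcomp Require Import monoid.
From mathcomp Require Import finmap.
From mathcomp.multinomials Require Import monalg.
From mathcomp Require Import ring.
From Stdlib Require Import Classical FunctionalExtensionality ProofIrrelevance.

(* Take a, b with a |> b <> b and a |> (b |> a) <> b (for a conjugation rack the
   latter means b |> (a |> b) <> a), put d = a |> b, and let C be the subalgebra of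
   B(V) generated by v_b and v_d.  In the shuffle realization of B(V) the element
   x = v_a v_b - q_ab v_d v_a equals v_(ab) - q_ab q_da v_((d|>a) d), so
     Delta(x) = x (x) 1 + 1 (x) x + v_a (x) v_b - q_ab q_da v_(d|>a) (x) v_d
   has all right legs in C<x>; x is homogeneous of degree two, and x is not in C
   since no element of C involves the word ab.
   That C and C<x> are left coideal subalgebras is one general fact: a subalgebra
   generated by N0- and G_X-homogeneous elements whose coproducts lie in
   B(V) (x) (the subalgebra) is again such.  It rests on the multiplicativity of
   deconcatenation for the braided tensor product,
   Delta(s t) = s_1 (g . t_1) (x) s_2 t_2 for s_2 homogeneous of degree g, and on
   the action of G_X on T(V) being well defined, which is checked by mapping G_X
   to the group of invertible monomial operators. *)

Set Implicit Arguments.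
Unset Strict Implicit.
Unset Printing Implicit Defensive.
Import GRing.Theory.
Local Open Scope ring_scope.

(* Identities in T(V) are proved by testing against all the linear forms
   [lin f t = \sum_w t_w f(w)] (lemma [lin_inj]). *)
Local Notation lin f := (mmap idfun f).

Lemma natr_and (R : nzSemiRingType) (b1 b2 : bool) : (b1 && b2)%:R = b1%:R * b2%:R :> R.
Proof. by rewrite -mulnb natrM. Qed.

Lemma natr_eq_cat2 (R : nzSemiRingType) (T : eqType) (x y : T) w1 w2 :
  ([:: x; y] == w1 ++ w2)%:R =
  ([:: x; y] == w1)%:R * ([::] == w2)%:R + ([::] == w1)%:R * ([:: x; y] == w2)%:R
  + ([:: x] == w1)%:R * ([:: y] == w2)%:R :> R.
Proof.
case: w1 => [|x1 [|x2 [|x3 w1]]]; case: w2 => [|y1 [|y2 [|y3 w2]]] //=;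
  by rewrite ?eqseq_cons ?andbT ?andbF ?mul0r ?mulr0 ?add0r ?addr0 ?mul1r ?mulr1 ?natr_and.
Qed.

Lemma sumr_rcons (R : nmodType) (T : Type) (r : seq T) x (F : T -> R) :
  \sum_(y <- rcons r x) F y = \sum_(y <- r) F y + F x.
Proof. by rewrite -cats1 big_cat big_seq1. Qed.

Section LinearForms.
Variables (k : fieldType) (K : choiceType).
Implicit Types (s t : {malg k[K]}) (f g : K -> k).

Lemma linU f x : lin f (<< x >> : {malg k[K]}) = f x.
Proof. by rewrite mmapU mul1r. Qed.

Lemma linZ f a t : lin f (a *: t) = a * lin f t.
Proof.
rewrite (mmapEw (msuppZ_le _ _)) mmapE mulr_sumr.
by apply: eq_bigr => x _; rewrite mcoeffZ mulrA.
Qed.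

Lemma lin_sum I (r : seq I) (F : I -> {malg k[K]}) f :
  lin f (\sum_(i <- r) F i) = \sum_(i <- r) lin f (F i).
Proof. exact: raddf_sum. Qed.

Lemma lin_eq_in f g t : {in msupp t, f =1 g} -> lin f t = lin g t.
Proof. by move=> fg; rewrite !mmapE; apply: eq_big_seq => x /fg ->. Qed.

Lemma lin_coef t x : lin (fun y => (y == x)%:R) t = t@_x.
Proof.
have [xt|xNt] := boolP (x \in msupp t).
  rewrite mmapE (big_fsetD1 x) //= eqxx mulr1 big1_fset ?addr0 //.
  by move=> y; rewrite !inE => /andP[/negbTE -> _] _; rewrite mulr0.
rewrite (mcoeff_outdom xNt) mmapE big1_seq // => y /= yt.
by case: eqP => [yx|_]; [move: yt; rewrite yx (negbTE xNt) | rewrite mulr0].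
Qed.

Lemma lin_inj s t : (forall f, lin f s = lin f t) -> s = t.
Proof. by move=> st; apply/malgP => x; rewrite -!lin_coef st. Qed.

Lemma lin_mull f a t : lin (fun x => a * f x) t = a * lin f t.
Proof. by rewrite !mmapE mulr_sumr; apply: eq_bigr => x _; rewrite mulrCA. Qed.

Lemma lin_mulr f a t : lin (fun x => f x * a) t = lin f t * a.
Proof. by rewrite !mmapE mulr_suml; apply: eq_bigr => x _; rewrite mulrA. Qed.

Lemma lin_add f g t : lin (fun x => f x + g x) t = lin f t + lin g t.
Proof. by rewrite !mmapE -big_split; apply: eq_bigr => x _; rewrite mulrDr. Qed.

Lemma lin_sumf I (r : seq I) (F : I -> K -> k) t :
  lin (fun x => \sum_(i <- r) F i x) t = \sum_(i <- r) lin (F i) t.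
Proof. by rewrite mmapE exchange_big; apply: eq_bigr => x _; rewrite mulr_sumr. Qed.

Lemma lin_delta f t y : lin (fun x => f x * (x == y)%:R) t = t@_y * f y.
Proof.
rewrite (@lin_eq_in _ (fun x => f y * (x == y)%:R)) ?lin_mull ?lin_coef 1?mulrC //.
by move=> x _; case: eqP => [->|]; rewrite ?mulr0.
Qed.

Lemma lin_seq (r : seq K) f t : uniq r -> {subset msupp t <= r} ->
  lin f t = \sum_(x <- r) t@_x * f x.
Proof.
move=> r_uniq t_r.
rewrite (bigID (mem (msupp t))) /= [X in _ = _ + X]big1 ?addr0; last first.
  by move=> x /mcoeff_outdom ->; rewrite mul0r.
rewrite -big_filter mmapE; apply: perm_big; apply: uniq_perm; rewrite ?filter_uniq //.
by move=> x; rewrite mem_filter; case: (boolP (x \in msupp t)) => // /t_r ->.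
Qed.

End LinearForms.

Section QuantumShuffle.
Variables (k : fieldType) (X : choiceType) (tr : X -> X -> X) (q : X -> X -> k).
Local Notation TV := (TV k X).
Local Notation vw := (@vw k X).
Local Notation shw := (shw tr q).
Local Notation shuf := (shuf tr q).
Local Notation qw := (qw q).
Implicit Types (s t : TV) (u w W : seq X).

Lemma mcoeff_vw w W : (vw w)@_W = (w == W)%:R.
Proof. by rewrite /Defs.vw mcoeffU. Qed.

Lemma lin_shuf f s t :
  lin f (shuf s t) = lin (fun u => lin (fun w => lin f (shw u w)) t) s.
Proof.
rewrite lin_sum [RHS]mmapE; apply: eq_bigr => u _.
by rewrite lin_sum mulr_sumr; apply: eq_bigr => w _; rewrite linZ mulrA.
Qed.

Lemma mcoeff_shuf s t W :
  (shuf s t)@_W = lin (fun u => lin (fun w => (shw u w)@_W) t) s.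
Proof.
rewrite -lin_coef lin_shuf; apply: lin_eq_in => u _.
by apply: lin_eq_in => w _; rewrite lin_coef.
Qed.

Lemma shufDl s1 s2 t : shuf (s1 + s2) t = shuf s1 t + shuf s2 t.
Proof. by apply: lin_inj => f; rewrite mmapD !lin_shuf mmapD. Qed.

Lemma shufDr s t1 t2 : shuf s (t1 + t2) = shuf s t1 + shuf s t2.
Proof.
apply: lin_inj => f; rewrite mmapD !lin_shuf -lin_add.
by apply: lin_eq_in => u _; rewrite mmapD.
Qed.

Lemma shufZl a s t : shuf (a *: s) t = a *: shuf s t.
Proof. by apply: lin_inj => f; rewrite linZ !lin_shuf linZ. Qed.

Lemma shufZr a s t : shuf s (a *: t) = a *: shuf s t.
Proof.
apply: lin_inj => f; rewrite linZ !lin_shuf -lin_mull.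
by apply: lin_eq_in => u _; rewrite linZ.
Qed.

Lemma shuf0l t : shuf 0 t = 0.
Proof. by rewrite -[in LHS](scale0r (0 : TV)) shufZl scale0r. Qed.

Lemma shuf0r s : shuf s 0 = 0.
Proof. by rewrite -[in LHS](scale0r (0 : TV)) shufZr scale0r. Qed.

Lemma shuf_suml I (r : seq I) (F : I -> TV) t :
  shuf (\sum_(i <- r) F i) t = \sum_(i <- r) shuf (F i) t.
Proof.
elim: r => [|i r IH]; first by rewrite !big_nil shuf0l.
by rewrite !big_cons shufDl IH.
Qed.

Lemma shuf_sumr I (r : seq I) (F : I -> TV) s :
  shuf s (\sum_(i <- r) F i) = \sum_(i <- r) shuf s (F i).
Proof.
elim: r => [|i r IH]; first by rewrite !big_nil shuf0r.
by rewrite !big_cons shufDr IH.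
Qed.

Lemma shuf_vw u w : shuf (vw u) (vw w) = shw u w.
Proof. by apply: lin_inj => f; rewrite lin_shuf !linU. Qed.

Lemma lin_rapp f a t : lin f (rapp a t) = lin (fun w => f (rcons w a)) t.
Proof. by rewrite lin_sum; apply: eq_bigr => w _; rewrite linZ linU. Qed.

Lemma rapp_vw a w : rapp a (vw w) = vw (rcons w a).
Proof. by apply: lin_inj => f; rewrite lin_rapp !linU. Qed.

Lemma mcoeff_rapp_rcons a t W c : (rapp a t)@_(rcons W c) = (c == a)%:R * t@_W.
Proof.
rewrite -lin_coef lin_rapp -lin_coef -lin_mull; apply: lin_eq_in => w _.
by rewrite eqseq_rcons natr_and mulrC eq_sym.
Qed.

Lemma mcoeff_rapp_nil a t : (rapp a t)@_[::] = 0.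
Proof.
by rewrite -lin_coef lin_rapp mmapE big1 // => -[|? ?] _; rewrite mulr0.
Qed.

Lemma qw_nil a : qw a [::] = 1.
Proof. exact: big_nil. Qed.

Lemma qw_cons a b w : qw a (b :: w) = q a b * qw a w.
Proof. exact: big_cons. Qed.

Lemma qw_cat a u w : qw a (u ++ w) = qw a u * qw a w.
Proof. exact: big_cat. Qed.

Lemma qw_rcons a b w : qw a (rcons w b) = qw a w * q a b.
Proof. by rewrite -cats1 qw_cat /Defs.qw big_seq1. Qed.

Lemma qw_rev a w : qw a (rev w) = qw a w.
Proof. exact: big_rev. Qed.

Lemma shw_nill w : shw [::] w = vw w.
Proof. by rewrite /Defs.shw /= revK. Qed.

Lemma shw_nilr u : shw u [::] = vw u.
Proof. by rewrite /Defs.shw /=; case: (rev u) (revK u) => [|a ru] <-. Qed.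

Lemma shw_rcons u a w b :
  shw (rcons u a) (rcons w b) =
  qw a (rcons w b) *: rapp a (shw u (map (tr a) (rcons w b)))
  + rapp b (shw (rcons u a) w).
Proof.
have shr_cons2 a' ru b' rw : shr tr q (a' :: ru) (b' :: rw) =
    qw a' (b' :: rw) *: rapp a' (shr tr q ru (map (tr a') (b' :: rw)))
    + rapp b' (shr tr q (a' :: ru) rw) by [].
rewrite /Defs.shw !rev_rcons shr_cons2.
by rewrite -map_rev rev_rcons -rev_rcons qw_rev.
Qed.

Lemma mcoeff_shw_nil u w : (shw u w)@_[::] = ((u == [::]) && (w == [::]))%:R.
Proof.
case/lastP: u => [|u a]; first by rewrite shw_nill mcoeff_vw eq_sym.
case/lastP: w => [|w b]; first by rewrite shw_nilr mcoeff_vw andbT; case: u.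
by rewrite shw_rcons mcoeffD mcoeffZ !mcoeff_rapp_nil mulr0 addr0; case: u.
Qed.

Lemma shw1 x y : shw [:: x] [:: y] = vw [:: x; y] + q x y *: vw [:: tr x y; x].
Proof.
rewrite (shw_rcons [::] x [::] y) /= shw_nill shw_nilr !rapp_vw /=.
by rewrite qw_cons qw_nil mulr1 addrC.
Qed.

Lemma mcoeff_shuf_eq0 s t W : (forall u w, s@_u * t@_w * (shw u w)@_W = 0) ->
  (shuf s t)@_W = 0.
Proof.
move=> stW; rewrite mcoeff_shuf mmapE big1 // => u _.
by rewrite mmapE mulr_sumr big1 // => w _; rewrite mulrA stW.
Qed.

(* The two summands of [(shw u w)@_(rcons W c)]: the last letter [c] is taken
   from [u] or from [w]. *)
Definition coef_lastl u w W c :=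
  if rev u is a :: ru then (c == a)%:R * qw a w * (shw (rev ru) (map (tr a) w))@_W
  else 0.

Definition coef_lastr u w W c :=
  if rev w is b :: rw then (c == b)%:R * (shw u (rev rw))@_W else 0.

Lemma coef_lastl_rcons u a w W c :
  coef_lastl (rcons u a) w W c = (c == a)%:R * qw a w * (shw u (map (tr a) w))@_W.
Proof. by rewrite /coef_lastl rev_rcons revK. Qed.

Lemma coef_lastr_rcons u w b W c :
  coef_lastr u (rcons w b) W c = (c == b)%:R * (shw u w)@_W.
Proof. by rewrite /coef_lastr rev_rcons revK. Qed.

Lemma mcoeff_shw_rcons u w W c :
  (shw u w)@_(rcons W c) = coef_lastl u w W c + coef_lastr u w W c.
Proof.
case/lastP: u => [|u a]; case/lastP: w => [|w b].
- by rewrite shw_nill mcoeff_vw addr0; case: W.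
- rewrite coef_lastr_rcons add0r !shw_nill !mcoeff_vw eqseq_rcons.
  by rewrite natr_and mulrC eq_sym.
- rewrite coef_lastl_rcons addr0 qw_nil mulr1 !shw_nilr !mcoeff_vw eqseq_rcons.
  by rewrite natr_and mulrC eq_sym.
- rewrite coef_lastl_rcons coef_lastr_rcons shw_rcons mcoeffD mcoeffZ.
  by rewrite !mcoeff_rapp_rcons mulrCA mulrA.
Qed.

End QuantumShuffle.

Section ShuffleCoproduct.
Variables (k : fieldType) (X : choiceType) (tr : X -> X -> X) (q : X -> X -> k).
Local Notation shw := (shw tr q).
Local Notation qw := (qw q).
Implicit Types (u v w W : seq X).

(* [gact v w = (c, w')] when [g_(v_1) ... g_(v_n) . v_w = c v_w'] *)
Fixpoint gact v w : k * seq X :=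
  if v is c :: v' then
    let p := gact v' w in (p.1 * qw c p.2, map (tr c) p.2)
  else (1, w).

Definition gcoef v w := (gact v w).1.
Definition gword v w := (gact v w).2.

Lemma gact_rcons v a w :
  gact (rcons v a) w = (qw a w * gcoef v (map (tr a) w), gword v (map (tr a) w)).
Proof.
elim: v => [|c v IH] /=; first by rewrite mul1r mulr1.
by rewrite IH /gcoef /gword /= mulrA.
Qed.

Lemma gcoef_rcons v a w : gcoef (rcons v a) w = qw a w * gcoef v (map (tr a) w).
Proof. by rewrite /gcoef gact_rcons. Qed.

Lemma gword_rcons v a w : gword (rcons v a) w = gword v (map (tr a) w).
Proof. by rewrite /gword gact_rcons. Qed.

Definition splits u := [seq (take i u, drop i u) | i <- iota 0 (size u).+1].
Arguments splits : simpl never.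

Lemma splits_rcons u a : splits (rcons u a) =
  rcons [seq (p.1, rcons p.2 a) | p <- splits u] (rcons u a, [::]).
Proof.
rewrite /splits size_rcons -addn1 iotaD map_cat cats1 -map_comp.
rewrite take_oversize ?drop_oversize ?size_rcons //; congr rcons.
apply/eq_in_map => i; rewrite mem_iota add0n ltnS => /andP[_ hi] /=.
by rewrite -cats1 takel_cat // cats1 drop_rcons.
Qed.

Lemma splits_map (f : X -> X) u :
  splits (map f u) = [seq (map f p.1, map f p.2) | p <- splits u].
Proof.
by rewrite /splits size_map -map_comp; apply: eq_map => i /=; rewrite map_take map_drop.
Qed.

Lemma cat_splits u p : p \in splits u -> p.1 ++ p.2 = u.
Proof. by case/mapP => i _ ->; rewrite cat_take_drop. Qed.

Lemma sum_splits_nilr u (F : seq X * seq X -> k) :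
  \sum_(p <- splits u) F p * (p.2 == [::])%:R = F (u, [::]).
Proof.
case/lastP: u => [|u a]; first by rewrite big_seq1 mulr1.
rewrite splits_rcons sumr_rcons big_map big1 /= ?add0r ?mulr1 //.
by move=> p _; rewrite -cats1; case: p.2 => [|? ?]; rewrite mulr0.
Qed.

(* Deconcatenation is multiplicative for the braided tensor product:
   Delta(u * w) = Delta(u) Delta(w), where moving the right tensor leg
   p.2 of Delta(u) past the left leg r.1 of Delta(w) applies g_(p.2). *)
Lemma mcoeff_shw_cat u w W1 W2 : (shw u w)@_(W1 ++ W2) =
  \sum_(p <- splits u) \sum_(r <- splits w)
     gcoef p.2 r.1 * (shw p.1 (gword p.2 r.1))@_W1 * (shw p.2 r.2)@_W2.
Proof.
elim/last_ind: W2 => [|W2 c IH] in u w *.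
  rewrite cats0.
  transitivity (\sum_(p <- splits u) (\sum_(r <- splits w)
     (gcoef p.2 r.1 * (shw p.1 (gword p.2 r.1))@_W1) * (r.2 == [::])%:R)
     * (p.2 == [::])%:R).
    by rewrite sum_splits_nilr sum_splits_nilr mul1r.
  apply: eq_bigr => p _; rewrite mulr_suml; apply: eq_bigr => r _.
  by rewrite mcoeff_shw_nil natr_and; ring.
rewrite -rcons_cat mcoeff_shw_rcons.
under eq_bigr do under eq_bigr do rewrite mcoeff_shw_rcons mulrDr.
under eq_bigr do rewrite big_split /=.
rewrite big_split /=; congr (_ + _).
  case/lastP: u => [|u a].
    by rewrite big_seq1 big1 // => r _; rewrite mulr0.
  rewrite coef_lastl_rcons IH splits_rcons sumr_rcons.
  rewrite [X in _ = _ + X]big1 ?addr0; last by move=> r _; rewrite mulr0.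
  rewrite [in RHS]big_map mulr_sumr; apply: eq_bigr => p _ /=.
  rewrite splits_map [in LHS]big_map mulr_sumr; apply: eq_big_seq => r rin /=.
  rewrite coef_lastl_rcons gcoef_rcons gword_rcons -(cat_splits rin) qw_cat.
  ring.
case/lastP: w => [|w b].
  by rewrite big1 // => p _; rewrite big_seq1 mulr0.
rewrite coef_lastr_rcons IH mulr_sumr; apply: eq_bigr => p _.
rewrite splits_rcons sumr_rcons mulr0 addr0 [in RHS]big_map.
rewrite mulr_sumr; apply: eq_bigr => r _ /=.
by rewrite coef_lastr_rcons; ring.
Qed.

End ShuffleCoproduct.

Section EnvelopingGroup.
Variables (X : Type) (tr : X -> X -> X).
Local Notation GX_eq := (GX_eq tr).
Implicit Types (u w : seq X).

Lemma foldr_map_cat (H : Type) (m : H -> H -> H) e (phi : X -> H) :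
  associative m -> left_id e m -> forall u w,
  foldr m e (map phi (u ++ w)) = m (foldr m e (map phi u)) (foldr m e (map phi w)).
Proof.
by move=> mA m1 u w; elim: u => [|x u IH] /=; rewrite ?m1 // IH mA.
Qed.

Lemma GX_eq_refl w : GX_eq w w.
Proof. by []. Qed.

Lemma GX_eq_sym u w : GX_eq u w -> GX_eq w u.
Proof. by move=> uw H m e i mA m1 m1r mV mVr phi rel; rewrite (uw H m e i). Qed.

Lemma GX_eq_trans v u w : GX_eq u v -> GX_eq v w -> GX_eq u w.
Proof.
by move=> uv vw H m e i mA m1 m1r mV mVr phi rel; rewrite (uv H m e i) // (vw H m e i).
Qed.

Lemma GX_eq_cat u u' w w' : GX_eq u u' -> GX_eq w w' -> GX_eq (u ++ w) (u' ++ w').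
Proof.
move=> uu ww H m e i mA m1 m1r mV mVr phi rel.
by rewrite !foldr_map_cat // (uu H m e i) // (ww H m e i).
Qed.

Lemma GX_eq_swap a w : GX_eq (map (tr a) w ++ [:: a]) (a :: w).
Proof.
move=> H m e i mA m1 m1r mV mVr phi rel.
rewrite foldr_map_cat //= m1r.
by elim: w => [|y w IH] /=; rewrite ?m1 ?m1r // -mA IH mA -rel -mA.
Qed.

End EnvelopingGroup.

Section ShuffleSupport.
Variables (k : fieldType) (X : choiceType) (tr : X -> X -> X) (q : X -> X -> k).
Local Notation shw := (shw tr q).
Implicit Types (u w W : seq X).

Lemma mcoeff_shw_neq0_rcons u w W c : (shw u w)@_(rcons W c) != 0 ->
  (exists2 u', u = rcons u' c & (shw u' (map (tr c) w))@_W != 0) \/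
  (exists2 w', w = rcons w' c & (shw u w')@_W != 0).
Proof.
rewrite mcoeff_shw_rcons => nz.
have {nz} [] : coef_lastl tr q u w W c != 0 \/ coef_lastr tr q u w W c != 0.
  apply/orP; apply: contraR nz; rewrite negb_or.
  by case/andP=> /negPn/eqP -> /negPn/eqP ->; rewrite addr0.
- case/lastP: u => [|u a]; first by rewrite eqxx.
  rewrite coef_lastl_rcons; have [->|] := eqVneq c a; last by rewrite !mul0r eqxx.
  by rewrite mul1r mulf_eq0 negb_or => /andP[_ ?]; left; exists u.
- case/lastP: w => [|w b]; first by rewrite eqxx.
  rewrite coef_lastr_rcons; have [->|] := eqVneq c b; last by rewrite mul0r eqxx.
  by rewrite mul1r => ?; right; exists w.
Qed.

Lemma size_shw u w W : (shw u w)@_W != 0 -> size W = (size u + size w)%N.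
Proof.
elim/last_ind: W => [|W c IH] in u w *.
  by rewrite mcoeff_shw_nil; case: u => [|? ?]; case: w => [|? ?]; rewrite ?eqxx.
case/mcoeff_shw_neq0_rcons => -[v -> /IH sW].
  by rewrite !size_rcons sW size_map addSn.
by rewrite !size_rcons sW addnS.
Qed.

Lemma GX_eq_shw u w W : (shw u w)@_W != 0 -> GX_eq tr (u ++ w) W.
Proof.
elim/last_ind: W => [|W c IH] in u w *.
  by rewrite mcoeff_shw_nil; case: u => [|? ?]; case: w => [|? ?]; rewrite ?eqxx.
case/mcoeff_shw_neq0_rcons => -[v -> /IH vW]; rewrite -!cats1.
  apply: (@GX_eq_trans _ _ (v ++ map (tr c) w ++ [:: c])).
    by rewrite -catA; apply/GX_eq_cat/GX_eq_sym/GX_eq_swap.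
  by rewrite catA; apply: GX_eq_cat.
by rewrite catA; apply: GX_eq_cat.
Qed.

End ShuffleSupport.

Section RackAction.
Variables (k : fieldType) (X : choiceType) (tr : X -> X -> X) (q : X -> X -> k).
Variable tr_inv : X -> X -> X.
Hypothesis tr_sd : forall x y z, tr x (tr y z) = tr (tr x y) (tr x z).
Hypothesis trK : forall x, cancel (tr x) (tr_inv x).
Hypothesis tr_invK : forall x, cancel (tr_inv x) (tr x).
Hypothesis q_cocycle : forall x y z,
  q (tr x y) (tr x z) * q x z = q x (tr y z) * q y z.
Local Notation TV := (TV k X).
Local Notation vw := (@vw k X).
Local Notation shw := (shw tr q).
Local Notation shuf := (shuf tr q).
Local Notation qw := (qw q).
Local Notation gcoef := (gcoef tr q).
Local Notation gword := (gword tr q).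
Local Notation nichols := (nichols tr q).
Implicit Types (s t : TV) (u v w W : seq X).

Lemma qw_cocycle c a w :
  qw a w * qw c (map (tr a) w) = qw (tr c a) (map (tr c) w) * qw c w.
Proof.
elim: w => [|y w IH]; first by rewrite !qw_nil mulr1.
rewrite /= !qw_cons.
transitivity ((q c (tr a y) * q a y) * (qw a w * qw c (map (tr a) w))); first by ring.
by rewrite IH -q_cocycle; ring.
Qed.

Lemma map_tr_inj c : injective (map (tr c)).
Proof. exact/inj_map/can_inj/trK. Qed.

Lemma mcoeff_shw_map c u w W :
  (shw u w)@_W * qw c W =
  qw c u * qw c w * (shw (map (tr c) u) (map (tr c) w))@_(map (tr c) W).
Proof.
elim/last_ind: W => [|V e IH] in u w *.
  rewrite !mcoeff_shw_nil qw_nil mulr1.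
  by case: u => [|? ?]; case: w => [|? ?]; rewrite /= ?qw_nil ?mul1r ?mulr0.
rewrite map_rcons !mcoeff_shw_rcons mulrDl mulrDr; congr (_ + _).
  case/lastP: u => [|u a]; first by rewrite mul0r mulr0.
  rewrite map_rcons !coef_lastl_rcons (inj_eq (can_inj (trK c))).
  have [->|] := eqVneq e a; last by rewrite !mul0r !mulr0.
  rewrite !mul1r !qw_rcons.
  transitivity (qw a w * ((shw u (map (tr a) w))@_V * qw c V) * q c a); first by ring.
  rewrite IH.
  have -> : map (tr (tr c a)) (map (tr c) w) = map (tr c) (map (tr a) w).
    by rewrite -!map_comp; apply: eq_map => y /=; rewrite [RHS]tr_sd.
  transitivity (qw c u * q c a * (qw a w * qw c (map (tr a) w))
    * (shw (map (tr c) u) (map (tr c) (map (tr a) w)))@_(map (tr c) V)); first by ring.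
  by rewrite qw_cocycle; ring.
case/lastP: w => [|w b]; first by rewrite mul0r mulr0.
rewrite map_rcons !coef_lastr_rcons (inj_eq (can_inj (trK c))).
have [->|] := eqVneq e b; last by rewrite !mul0r !mulr0.
rewrite !mul1r !qw_rcons.
transitivity ((shw u w)@_V * qw c V * q c b); first by ring.
by rewrite IH; ring.
Qed.

Definition act v t : TV := \sum_(w <- msupp t) (t@_w * gcoef v w) *: vw (gword v w).

Lemma lin_act f v t : lin f (act v t) = lin (fun w => gcoef v w * f (gword v w)) t.
Proof.
by rewrite lin_sum [RHS]mmapE; apply: eq_bigr => w _; rewrite linZ linU mulrA.
Qed.

Lemma mcoeff_act v t W : (act v t)@_W = lin (fun w => gcoef v w * (gword v w == W)%:R) t.
Proof. by rewrite -lin_coef lin_act. Qed.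

Lemma actD v s t : act v (s + t) = act v s + act v t.
Proof. by apply: lin_inj => f; rewrite mmapD !lin_act mmapD. Qed.

Lemma actZ v a t : act v (a *: t) = a *: act v t.
Proof. by apply: lin_inj => f; rewrite linZ !lin_act linZ. Qed.

Lemma act_vw v w : act v (vw w) = gcoef v w *: vw (gword v w).
Proof. by apply: lin_inj => f; rewrite lin_act linZ !linU. Qed.

Lemma act_nil t : act [::] t = t.
Proof.
by apply: lin_inj => f; rewrite lin_act; apply: lin_eq_in => w _; rewrite mul1r.
Qed.

Lemma act_cons c v t : act (c :: v) t = act [:: c] (act v t).
Proof.
apply: lin_inj => f; rewrite !lin_act; apply: lin_eq_in => w _.
by rewrite /gcoef /gword /=; ring.
Qed.

Lemma act1_shw c u w :
  act [:: c] (shw u w) = (qw c u * qw c w) *: shw (map (tr c) u) (map (tr c) w).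
Proof.
apply/malgP => W; rewrite mcoeff_act mcoeffZ.
have -> : W = map (tr c) (map (tr_inv c) W).
  by rewrite -map_comp map_id_in // => x _ /=; rewrite tr_invK.
rewrite (@lin_eq_in _ _ _ (fun x => (1 * qw c x) * (x == map (tr_inv c) W)%:R)).
  by rewrite lin_delta mul1r mcoeff_shw_map.
by move=> x _; rewrite /gword /= (inj_eq (@map_tr_inj c)).
Qed.

Lemma act1_shuf c s t : act [:: c] (shuf s t) = shuf (act [:: c] s) (act [:: c] t).
Proof.
apply: lin_inj => f; rewrite lin_act !lin_shuf lin_act.
apply: lin_eq_in => u _; rewrite lin_act -lin_mull; apply: lin_eq_in => w _.
by rewrite -(lin_act f) act1_shw linZ /gcoef /=; ring.
Qed.

Lemma nichols_act v t : nichols t -> nichols (act v t).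
Proof.
elim: v => [|c v IH] nt; first by rewrite act_nil.
rewrite act_cons; elim: {nt}(IH nt) => [|x|s1 s2 _ n1 _ n2|a s1 _ n1|s1 s2 _ n1 _ n2].
- by rewrite act_vw; apply/nich_scale/nich_one.
- by rewrite act_vw; apply/nich_scale/nich_gen.
- by rewrite actD; apply: nich_add.
- by rewrite actZ; apply: nich_scale.
- by rewrite act1_shuf; apply: nich_mul.
Qed.

End RackAction.

Section MonomialGroup.
Variables (k : fieldType) (X : choiceType) (tr : X -> X -> X) (q : X -> X -> k).
Variable tr_inv : X -> X -> X.
Hypothesis tr_sd : forall x y z, tr x (tr y z) = tr (tr x y) (tr x z).
Hypothesis trK : forall x, cancel (tr x) (tr_inv x).
Hypothesis tr_invK : forall x, cancel (tr_inv x) (tr x).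
Hypothesis q_cocycle : forall x y z,
  q (tr x y) (tr x z) * q x z = q x (tr y z) * q y z.
Hypothesis q_neq0 : forall x y, q x y != 0.
Implicit Types (u v w : seq X).

(* Invertible monomial operators v_w |-> coef w * v_(word w) on T(V).  They
   form a group receiving G_X, which turns [GX_eq] into equality of actions. *)
Record mono := Mono {
  mono_word : seq X -> seq X;
  mono_word_inv : seq X -> seq X;
  mono_coef : seq X -> k;
  mono_wordK : cancel mono_word mono_word_inv;
  mono_word_invK : cancel mono_word_inv mono_word;
  mono_coef_neq0 : forall w, mono_coef w != 0 }.

Lemma mono_eq h1 h2 :
  mono_word h1 =1 mono_word h2 -> mono_coef h1 =1 mono_coef h2 -> h1 = h2.
Proof.
case: h1 h2 => s1 i1 l1 K1 KV1 n1 [s2 i2 l2 K2 KV2 n2] /=.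
move=> /functional_extensionality es /functional_extensionality el.
subst s2 l2; have ei : i1 = i2.
  by apply: functional_extensionality => w; rewrite -{1}(KV2 w) K1.
subst i2; congr Mono; exact: proof_irrelevance.
Qed.

Definition mono_mul h1 h2 := Mono
  (can_comp (mono_wordK h1) (mono_wordK h2))
  (can_comp (mono_word_invK h2) (mono_word_invK h1))
  (fun w => mulf_neq0 (mono_coef_neq0 h2 w) (mono_coef_neq0 h1 (mono_word h2 w))).

Definition mono_one := @Mono id id (fun=> 1) (frefl _) (frefl _) (fun=> oner_neq0 k).

Definition mono_inv h := Mono (mono_word_invK h) (mono_wordK h)
  (fun w => invr_neq0 (mono_coef_neq0 h (mono_word_inv h w))).

Lemma mono_mulA : associative mono_mul.
Proof. by move=> h1 h2 h3; apply: mono_eq => //= w; rewrite mulrA. Qed.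

Lemma mono_mul1 : left_id mono_one mono_mul.
Proof. by move=> h; apply: mono_eq => //= w; rewrite mulr1. Qed.

Lemma mono_mulr1 : right_id mono_one mono_mul.
Proof. by move=> h; apply: mono_eq => //= w; rewrite mul1r. Qed.

Lemma mono_mulV : left_inverse mono_one mono_inv mono_mul.
Proof.
case=> s i l K KV n; apply: mono_eq => w /=; first exact: K.
by rewrite K divff.
Qed.

Lemma mono_mulVr : right_inverse mono_one mono_inv mono_mul.
Proof.
case=> s i l K KV n; apply: mono_eq => w /=; first exact: KV.
by rewrite mulVf.
Qed.

Lemma qw_neq0 a w : qw q a w != 0.
Proof. by rewrite /Defs.qw prodf_seq_neq0; apply/allP => y _ /=; apply: q_neq0. Qed.

Definition mono_gen x := Mono (mapK (trK x)) (mapK (tr_invK x)) (@qw_neq0 x).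

Lemma mono_gen_rel x y :
  mono_mul (mono_gen x) (mono_gen y) = mono_mul (mono_gen (tr x y)) (mono_gen x).
Proof.
apply: mono_eq; move=> w /=; last by rewrite qw_cocycle // mulrC.
by rewrite -!map_comp; apply: eq_map => z /=; apply: tr_sd.
Qed.

Lemma gact_mono_gen v w : gact tr q v w =
  (mono_coef (foldr mono_mul mono_one (map mono_gen v)) w,
   mono_word (foldr mono_mul mono_one (map mono_gen v)) w).
Proof. by elim: v => [|c v IH] //=; rewrite IH. Qed.

Lemma gact_GX_eq v u w : GX_eq tr v u -> gact tr q v w = gact tr q u w.
Proof.
move=> /(_ _ _ _ _ mono_mulA mono_mul1 mono_mulr1 mono_mulV mono_mulVr _ mono_gen_rel) vu.
by rewrite !gact_mono_gen vu.
Qed.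

End MonomialGroup.

Section CoproductDecomposition.
Variables (k : fieldType) (X : choiceType) (tr : X -> X -> X) (q : X -> X -> k).
Local Notation TV := (TV k X).
Local Notation shw := (shw tr q).
Local Notation shuf := (shuf tr q).
Local Notation gcoef := (gcoef tr q).
Local Notation gword := (gword tr q).
Local Notation act := (act tr q).
Implicit Types (s t : TV) (u w : seq X).

Definition is_coproduct s (S : seq (TV * TV)) :=
  forall w1 w2, s@_(w1 ++ w2) = \sum_(p <- S) p.1@_w1 * p.2@_w2.

Lemma mem_splits u p : (p \in splits u) = (p.1 ++ p.2 == u).
Proof.
apply/idP/eqP => [|<-]; first exact: cat_splits.
apply/mapP; exists (size p.1); first by rewrite mem_iota leq0n add0n ltnS size_cat leq_addr.
by rewrite take_size_cat // drop_size_cat // -surjective_pairing.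
Qed.

Lemma splits_uniq u : uniq (splits u).
Proof.
rewrite map_inj_in_uniq ?iota_uniq // => i j; rewrite !mem_iota !ltnS.
by case/andP=> _ iu /andP[_ ju] [eij _]; rewrite -(size_takel iu) eij size_takel.
Qed.

Lemma sum_splits (r1 r2 : seq (seq X)) u (G : seq X -> seq X -> k) :
  uniq r1 -> uniq r2 -> (forall p, p \in splits u -> p.1 \in r1 /\ p.2 \in r2) ->
  \sum_(p <- splits u) G p.1 p.2 =
  \sum_(u1 <- r1) \sum_(u2 <- r2) (u1 ++ u2 == u)%:R * G u1 u2.
Proof.
move=> r1_uniq r2_uniq split_r.
transitivity (\sum_(p <- [seq (x, y) | x <- r1, y <- r2] | p.1 ++ p.2 == u) G p.1 p.2).
  rewrite -[RHS]big_filter; apply: perm_big; apply: uniq_perm; first exact: splits_uniq.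
    by rewrite filter_uniq // allpairs_uniq // => -[? ?] [? ?] _ _ [-> ->].
  move=> p; rewrite mem_filter mem_splits; apply/idP/andP => [pu|[] //]; split => //.
  have [p1 p2] : p.1 \in r1 /\ p.2 \in r2 by apply: split_r; rewrite mem_splits.
  by case: p p1 p2 {pu} => x y p1 p2; apply/allpairsP; exists (x, y).
rewrite big_mkcond big_allpairs; apply: eq_bigr => u1 _; apply: eq_bigr => u2 _.
by case: eqP; rewrite ?mul1r ?mul0r.
Qed.

Lemma lin_splits s S (G : seq X * seq X -> k) : is_coproduct s S ->
  lin (fun u => \sum_(p <- splits u) G p) s =
  \sum_(p <- S) lin (fun u1 => lin (fun u2 => G (u1, u2)) p.2) p.1.
Proof.
move=> sS.
pose r (f : seq X * seq X -> seq X) (g : TV * TV -> TV) :=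
  undup (flatten [seq map f (splits u) | u <- msupp s] ++
         flatten [seq (msupp (g p) : seq _) | p <- S]).
have r_splits f g u p : u \in msupp s -> p \in splits u -> f p \in r f g.
  move=> us pu; rewrite mem_undup mem_cat; apply/orP; left.
  by apply/flattenP; exists (map f (splits u)); apply/mapP; [exists u | exists p].
have r_S f g p x : p \in S -> x \in msupp (g p) -> x \in r f g.
  move=> pS xp; rewrite mem_undup mem_cat; apply/orP; right.
  by apply/flattenP; exists (msupp (g p) : seq _) => //; apply/mapP; exists p.
set r1 := r fst fst; set r2 := r snd snd.
have [r1_uniq r2_uniq] : uniq r1 /\ uniq r2 by split; apply: undup_uniq.
transitivity (\sum_(u1 <- r1) \sum_(u2 <- r2) s@_(u1 ++ u2) * G (u1, u2)).
  rewrite mmapE.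
  under eq_big_seq => u us.
    rewrite (eq_bigr (fun p => G (p.1, p.2))); last by case.
    rewrite (@sum_splits r1 r2 u (fun a b => G (a, b))) //; last first.
      by move=> p pu; split; [apply: (r_splits fst fst u) | apply: (r_splits snd snd u)].
    rewrite mulr_sumr; under eq_bigr do rewrite mulr_sumr.
    over.
  rewrite exchange_big; apply: eq_bigr => u1 _; rewrite exchange_big.
  apply: eq_bigr => u2 _; rewrite -lin_coef mmapE mulr_suml.
  by apply: eq_bigr => u _ /=; rewrite eq_sym; ring.
under eq_bigr do under eq_bigr do rewrite sS mulr_suml.
under eq_bigr do rewrite exchange_big /=.
rewrite exchange_big /=; apply: eq_big_seq => p pS.
rewrite (@lin_seq _ _ r1) // => [|x]; last exact: (r_S fst fst).
apply: eq_bigr => u1 _; rewrite (@lin_seq _ _ r2) // => [|x]; last exact: (r_S snd snd).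
by rewrite mulr_sumr; apply: eq_bigr => u2 _; ring.
Qed.

(* Delta(s t) = \sum s_1 (g . t_1) (x) s_2 t_2 when every right leg s_2 of
   Delta(s) is G_X-homogeneous of degree g, recorded as the word p.2. *)
Lemma is_coproduct_shuf s t (S : seq (TV * TV * seq X)) (T : seq (TV * TV)) :
  is_coproduct s [seq p.1 | p <- S] -> is_coproduct t T ->
  (forall p, p \in S -> forall u, u \in msupp p.1.2 -> gact tr q u =1 gact tr q p.2) ->
  is_coproduct (shuf s t)
    [seq (shuf p.1.1 (act p.2 r.1), shuf p.1.2 r.2) | p <- S, r <- T].
Proof.
move=> sS tT S_homog W1 W2.
rewrite mcoeff_shuf.
under lin_eq_in => u _ do under lin_eq_in => w _ do rewrite mcoeff_shw_cat.
under lin_eq_in => u _ do rewrite lin_sumf.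
rewrite (lin_splits _ sS) big_map big_allpairs_dep; apply: eq_big_seq => P PS.
under lin_eq_in => u1 _ do under lin_eq_in => u2 _ do rewrite (lin_splits _ tT).
under lin_eq_in => u1 _ do rewrite lin_sumf.
rewrite lin_sumf; apply: eq_bigr => Q _ /=; rewrite !mcoeff_shuf.
transitivity (lin (fun u1 => lin (fun u2 => lin (fun w1 => lin (fun w2 =>
   gcoef P.2 w1 * (shw u1 (gword P.2 w1))@_W1 * (shw u2 w2)@_W2) Q.2) Q.1) P.1.2) P.1.1).
  apply: lin_eq_in => u1 _; apply: lin_eq_in => u2 u2P.
  apply: lin_eq_in => w1 _; apply: lin_eq_in => w2 _ /=.
  by rewrite /gcoef /gword (S_homog P PS u2 u2P w1).
rewrite -lin_mulr; apply: lin_eq_in => u1 _.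
rewrite -lin_mull; apply: lin_eq_in => u2 _.
by rewrite lin_act -lin_mulr; apply: lin_eq_in => w1 _; rewrite -lin_mull.
Qed.

End CoproductDecomposition.

Section WordGrading.
Variables (k : fieldType) (X : choiceType) (tr : X -> X -> X) (q : X -> X -> k).
Local Notation TV := (TV k X).
Local Notation vw := (@vw k X).
Local Notation shw := (shw tr q).
Local Notation shuf := (shuf tr q).
Implicit Types (s t : TV) (u w W : seq X).

(* [E] is a grading of words for which the quantum shuffle product is graded;
   it is used with equal length (the N0-grading) and with equality in G_X. *)
Variable E : seq X -> seq X -> Prop.
Hypothesis E_refl : forall w, E w w.
Hypothesis E_sym : forall u w, E u w -> E w u.
Hypothesis E_trans : forall v u w, E u v -> E v w -> E u w.
Hypothesis E_cat : forall u u' w w', E u u' -> E w w' -> E (u ++ w) (u' ++ w').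
Hypothesis E_shw : forall u w W, (shw u w)@_W != 0 -> E (u ++ w) W.

Variable D : TV -> Prop.

Definition is_homog t r := forall w, t@_w != 0 -> E r w.

Definition homog_sum t := exists L : seq (TV * seq X),
  (forall p, p \in L -> D p.1 /\ is_homog p.1 p.2) /\ t = \sum_(p <- L) p.1.

Definition has_homog_components t := forall w0, exists d, D d /\
  forall w, (E w0 w -> d@_w = t@_w) /\ (~ E w0 w -> d@_w = 0).

Lemma is_homog_vw w : is_homog (vw w) w.
Proof. by move=> W; rewrite mcoeff_vw; have [<-|] := eqVneq w W; rewrite ?eqxx. Qed.

Lemma is_homog_shuf s t u w : is_homog s u -> is_homog t w -> is_homog (shuf s t) (u ++ w).
Proof.
move=> su tw W stW; apply: NNPP => uwW; move/eqP: stW; apply.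
rewrite mcoeff_shuf mmapE big1_seq // => u' /andP[_ u's].
rewrite mmapE mulr_sumr big1_seq // => w' /andP[_ w't].
have [->|/E_shw uwW'] := eqVneq ((shw u' w')@_W) 0; first by rewrite !mulr0.
case: uwW; apply: E_trans (E_cat (su _ _) (tw _ _)) uwW'; by rewrite mcoeff_neq0.
Qed.

Lemma homog_sum_homog d r : D d -> is_homog d r -> homog_sum d.
Proof.
by move=> Dd dr; exists [:: (d, r)]; rewrite big_seq1; split => // p /[!inE] /eqP ->.
Qed.

Hypothesis D0 : D 0.
Hypothesis DD : forall s t, D s -> D t -> D (s + t).
Hypothesis DZ : forall a s, D s -> D (a *: s).
Hypothesis D_shuf : forall s t, D s -> D t -> D (shuf s t).

Lemma homog_sumD s t : homog_sum s -> homog_sum t -> homog_sum (s + t).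
Proof.
case=> L [hL ->] [L' [hL' ->]]; exists (L ++ L'); split; last by rewrite big_cat.
by move=> p; rewrite mem_cat => /orP[/hL|/hL'].
Qed.

Lemma homog_sumZ a s : homog_sum s -> homog_sum (a *: s).
Proof.
case=> L [hL ->]; exists [seq (a *: p.1, p.2) | p <- L]; split.
  move=> _ /mapP[p pL ->] /=; have [Dp hp] := hL p pL.
  by split => [|w]; [apply: DZ | rewrite mcoeffZ mulf_eq0 negb_or => /andP[_ /hp]].
by rewrite big_map scaler_sumr.
Qed.

Lemma homog_sum_shuf s t : homog_sum s -> homog_sum t -> homog_sum (shuf s t).
Proof.
case=> L [hL ->] [L' [hL' ->]].
exists [seq (shuf p.1 r.1, p.2 ++ r.2) | p <- L, r <- L']; split.
  move=> _ /allpairsP[[p r] [pL rL ->]] /=.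
  have [Dp hp] := hL p pL; have [Dr hr] := hL' r rL.
  by split; [apply: D_shuf | apply: is_homog_shuf].
rewrite big_allpairs_dep shuf_suml; apply: eq_bigr => p _.
by rewrite shuf_sumr.
Qed.

Lemma homog_sum_components t : homog_sum t -> has_homog_components t.
Proof.
case=> L [hL ->] w0; elim: L hL => [|p L IH] hL.
  by exists 0; split => // w; rewrite big_nil mcoeff0.
have [d [Dd hd]] : exists d, D d /\ forall w,
    (E w0 w -> d@_w = (\sum_(p <- L) p.1)@_w) /\ (~ E w0 w -> d@_w = 0).
  by apply: IH => p' p'L; apply: hL; rewrite inE p'L orbT.
have [Dp hp] := hL p (mem_head _ _).
case: (classic (E w0 p.2)) => w0p.
  exists (p.1 + d); split; first exact: DD.
  move=> w; split => w0w; first by rewrite big_cons !mcoeffD (proj1 (hd w) w0w).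
  rewrite mcoeffD (proj2 (hd w) w0w) addr0.
  by have [//|/hp pw] := eqVneq (p.1@_w) 0; case: w0w; apply: E_trans pw.
exists d; split => // w; split => w0w; last exact: (proj2 (hd w) w0w).
rewrite big_cons mcoeffD (proj1 (hd w) w0w).
have [->|/hp pw] := eqVneq (p.1@_w) 0; first by rewrite add0r.
by case: w0p; apply: E_trans w0w (E_sym pw).
Qed.

End WordGrading.

Arguments is_homog_vw {k X E} E_refl w.

Section GeneratedSubalgebra.
Variables (k : fieldType) (X : choiceType) (tr : X -> X -> X) (q : X -> X -> k).
Variable tr_inv : X -> X -> X.
Hypothesis tr_sd : forall x y z, tr x (tr y z) = tr (tr x y) (tr x z).
Hypothesis trK : forall x, cancel (tr x) (tr_inv x).
Hypothesis tr_invK : forall x, cancel (tr_inv x) (tr x).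
Hypothesis q_cocycle : forall x y z,
  q (tr x y) (tr x z) * q x z = q x (tr y z) * q y z.
Hypothesis q_neq0 : forall x y, q x y != 0.
Local Notation TV := (TV k X).
Local Notation vw := (@vw k X).
Local Notation shw := (shw tr q).
Local Notation shuf := (shuf tr q).
Local Notation nichols := (nichols tr q).
Local Notation GX_eq := (GX_eq tr).
Implicit Types (D : TV -> Prop) (s t : TV) (u w W : seq X).

Definition same_size u w := size u = size w.

Lemma same_size_refl w : same_size w w.
Proof. by []. Qed.

Lemma same_size_sym u w : same_size u w -> same_size w u.
Proof. exact: esym. Qed.

Lemma same_size_trans v u w : same_size u v -> same_size v w -> same_size u w.
Proof. exact: etrans. Qed.

Lemma same_size_cat u u' w w' :
  same_size u u' -> same_size w w' -> same_size (u ++ w) (u' ++ w').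
Proof. by rewrite /same_size !size_cat => -> ->. Qed.

Lemma same_size_shw u w W : (shw u w)@_W != 0 -> same_size (u ++ w) W.
Proof. by move/size_shw; rewrite /same_size size_cat. Qed.

Definition coideal_in D t := exists S : seq (TV * TV),
  (forall p, p \in S -> nichols p.1 /\ D p.2) /\ is_coproduct t S.

Lemma coideal_inD D s t : coideal_in D s -> coideal_in D t -> coideal_in D (s + t).
Proof.
case=> S [hS sS] [T [hT tT]]; exists (S ++ T); split.
  by move=> p; rewrite mem_cat => /orP[/hS|/hT].
by move=> w1 w2; rewrite mcoeffD sS tT big_cat.
Qed.

Lemma coideal_inZ D a t : coideal_in D t -> coideal_in D (a *: t).
Proof.
case=> S [hS tS]; exists [seq (a *: p.1, p.2) | p <- S]; split.
  by move=> _ /mapP[p pS ->] /=; have [n1 n2] := hS p pS; split => //; apply: nich_scale.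
move=> w1 w2; rewrite mcoeffZ tS big_map mulr_sumr; apply: eq_bigr => p _.
by rewrite mcoeffZ mulrA.
Qed.

Lemma is_coproduct_vw1 c :
  is_coproduct (vw [:: c]) [:: (vw [:: c], vw [::]); (vw [::], vw [:: c])].
Proof.
move=> w1 w2; rewrite !big_cons big_nil addr0 /= !mcoeff_vw.
by case: w1 => [|x [|y w1]]; case: w2 => [|x' [|y' w2]] //=;
  rewrite ?eqseq_cons ?andbT ?andbF ?mul0r ?mulr0 ?mul1r ?mulr1 ?add0r ?addr0.
Qed.

Lemma coideal_in_vw_nil D : D (vw [::]) -> coideal_in D (vw [::]).
Proof.
move=> D1; exists [:: (vw [::], vw [::])]; split.
  by move=> p /[!inE] /eqP -> /=; split => //; apply: nich_one.
move=> w1 w2; rewrite big_seq1 /= !mcoeff_vw.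
by case: w1 => [|? ?]; case: w2 => [|? ?]; rewrite ?mul1r ?mul0r ?mulr0.
Qed.

Lemma coideal_in_vw1 D c : D (vw [::]) -> D (vw [:: c]) -> coideal_in D (vw [:: c]).
Proof.
move=> D1 Dc; exists [:: (vw [:: c], vw [::]); (vw [::], vw [:: c])].
split; last exact: is_coproduct_vw1.
by move=> p /[!inE] /orP[] /eqP -> /=; split => //; [apply: nich_gen | apply: nich_one].
Qed.

Lemma refine_coproduct D t S :
  (forall p, p \in S -> nichols p.1 /\ D p.2) ->
  (forall c, D c -> homog_sum GX_eq D c) -> is_coproduct t S ->
  exists S' : seq (TV * TV * seq X),
    (forall p, p \in S' -> [/\ nichols p.1.1, D p.1.2 & is_homog GX_eq p.1.2 p.2]) /\
    is_coproduct t [seq p.1 | p <- S'].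
Proof.
move=> hS D_homog tS.
suff [S' [hS' eS']] : exists S' : seq (TV * TV * seq X),
    (forall p, p \in S' -> [/\ nichols p.1.1, D p.1.2 & is_homog GX_eq p.1.2 p.2]) /\
    forall w1 w2, \sum_(p <- S) p.1@_w1 * p.2@_w2 =
                  \sum_(p <- S') p.1.1@_w1 * p.1.2@_w2.
  by exists S'; split => // w1 w2; rewrite tS eS' big_map.
elim: S hS {tS} => [|p S IH] hS; first by exists [::]; split => // w1 w2; rewrite !big_nil.
have /IH[S' [hS' eS']] : forall p', p' \in S -> nichols p'.1 /\ D p'.2.
  by move=> p' p'S; apply: hS; rewrite inE p'S orbT.
have [n1 /D_homog [L [hL p2E]]] := hS p (mem_head _ _).
exists ([seq ((p.1, e.1), e.2) | e <- L] ++ S'); split.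
  move=> x; rewrite mem_cat => /orP[/mapP[e eL ->] /=|/hS' //].
  by have [] := hL e eL; split.
move=> w1 w2; rewrite big_cons big_cat eS' big_map; congr (_ + _).
by rewrite p2E raddf_sum mulr_sumr.
Qed.

Lemma coideal_in_shuf D s t :
  (forall c, D c -> homog_sum GX_eq D c) ->
  (forall s t, D s -> D t -> D (shuf s t)) ->
  coideal_in D s -> coideal_in D t -> coideal_in D (shuf s t).
Proof.
move=> D_homog D_shuf [S [hS sS]] [T [hT tT]].
have [S' [hS' sS']] := refine_coproduct hS D_homog sS.
exists [seq (shuf p.1.1 (act tr q p.2 r.1), shuf p.1.2 r.2) | p <- S', r <- T].
split.
  move=> _ /allpairsP[[p r] [pS' rT ->]] /=.
  have [n1 D2 _] := hS' p pS'; have [n1' D2'] := hT r rT.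
  by split; [apply/nich_mul/nichols_act | apply: D_shuf].
apply: (is_coproduct_shuf sS' tT) => p pS' u up w.
have [_ _ /(_ u)] := hS' p pS'; rewrite mcoeff_neq0 => /(_ up) pu.
exact/esym/(gact_GX_eq tr_sd trK tr_invK q_cocycle q_neq0).
Qed.

Definition admissible D t :=
  [/\ nichols t, homog_sum same_size D t, homog_sum GX_eq D t & coideal_in D t].

Lemma admissible_sub D1 D2 t : (forall s, D1 s -> D2 s) -> admissible D1 t -> admissible D2 t.
Proof.
move=> D12 [nt [L1 [hL1 tL1]] [L2 [hL2 tL2]] [S [hS tS]]]; split => //.
- by exists L1; split => // p /hL1[/D12 ? ?].
- by exists L2; split => // p /hL2[/D12 ? ?].
- by exists S; split => // p /hS[? /D12 ?].
Qed.

Lemma admissible_vw1 D c : D (vw [::]) -> D (vw [:: c]) -> admissible D (vw [:: c]).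
Proof.
move=> D1 Dc; split; first exact: nich_gen.
- exact: homog_sum_homog Dc (is_homog_vw same_size_refl _).
- exact: homog_sum_homog Dc (is_homog_vw (@GX_eq_refl _ tr) _).
- exact: coideal_in_vw1.
Qed.

Section Generated.
Variables (C : TV -> Prop) (x : TV).
Local Notation D := (gen_subalg tr q C x).
Hypothesis C_adm : forall c, C c -> admissible D c.
Hypothesis x_adm : admissible D x.

Lemma gen_subalg0 : D 0.
Proof. by rewrite -(scale0r (vw [::])); apply/gen_scale/gen_one. Qed.

Lemma gen_subalg_homog c :
  D c -> [/\ nichols c, homog_sum same_size D c & homog_sum GX_eq D c].
Proof.
have D_shuf s t : D s -> D t -> D (shuf s t) by exact: gen_mul.
have D_scale a s : D s -> D (a *: s) by exact: gen_scale.
elim=> [c' /C_adm[? ? ? _]| |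
       |s t _ [n1 h1 g1] _ [n2 h2 g2]|a s _ [n1 h1 g1]|s t _ [n1 h1 g1] _ [n2 h2 g2]].
- by [].
- by case: x_adm.
- have D1 : D (vw [::]) by apply: gen_one.
  split; first exact: nich_one.
    exact: homog_sum_homog D1 (is_homog_vw same_size_refl _).
  exact: homog_sum_homog D1 (is_homog_vw (@GX_eq_refl _ tr) _).
- by split; [apply: nich_add | apply: homog_sumD | apply: homog_sumD].
- by split; [apply: nich_scale | apply: homog_sumZ | apply: homog_sumZ].
- split; first exact: nich_mul.
    by apply: homog_sum_shuf; [exact: same_size_trans | exact: same_size_cat
                              | exact: same_size_shw | | |].
  by apply: homog_sum_shuf; [exact: GX_eq_trans | exact: GX_eq_cat | exact: GX_eq_shw | | |].
Qed.

Lemma admissible_gen_subalg c : D c -> admissible D c.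
Proof.
move=> Dc; have [nc hs hg] := gen_subalg_homog Dc; split => //.
elim: Dc {nc hs hg} => [c' /C_adm[_ _ _ //]| | |s t _ cs _ ct|a s _ cs|s t _ cs _ ct].
- by case: x_adm.
- exact/coideal_in_vw_nil/gen_one.
- exact: coideal_inD.
- exact: coideal_inZ.
- apply: coideal_in_shuf => //; first by move=> c' /gen_subalg_homog[].
  by move=> *; apply: gen_mul.
Qed.

Variable x0 : X.

Lemma lcsa_gen_subalg : lcsa tr q D.
Proof.
split; first by move=> c /admissible_gen_subalg[].
split; first exact: gen_one.
split; first exact: gen_add.
split; first exact: gen_scale.
split; first exact: gen_mul.
split.
  move=> c /admissible_gen_subalg[_ hs _ _] n.
  have [d [Dd hd]] := homog_sum_components (@same_size_sym) (@same_size_trans)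
    gen_subalg0 (@gen_add _ _ tr q C x) hs (nseq n x0).
  exists d; split => // w; rewrite /same_size size_nseq in hd.
  by case: eqP => [/esym|nw]; [apply: (proj1 (hd w)) | apply: (proj2 (hd w)) => /esym].
split.
  move=> c /admissible_gen_subalg[_ _ hg _].
  exact: (homog_sum_components (@GX_eq_sym _ tr) (@GX_eq_trans _ tr)
    gen_subalg0 (@gen_add _ _ tr q C x) hg).
by move=> c /admissible_gen_subalg[_ _ _ [S [hS cS]]]; exists S.
Qed.

End Generated.

End GeneratedSubalgebra.

Section ConjugationRack.
Variables (G : groupType) (Xp : pred G) (hX : conj_closed Xp).
Local Notation X := (crack Xp).
Local Notation tr := (ctr hX).
Local Open Scope group_scope.

Definition ctr_inv (x y : X) : X := exist _ (sval y ^ sval x) (hX (sval x) (proj2_sig y)).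

Lemma ctr_sd x y z : tr x (tr y z) = tr (tr x y) (tr x z).
Proof. by apply: val_inj => /=; rewrite -!conjgM -!invgM -conjgCV. Qed.

Lemma ctrK x : cancel (tr x) (ctr_inv x).
Proof. by move=> y; apply: val_inj => /=; rewrite conjgKV. Qed.

Lemma ctr_invK x : cancel (ctr_inv x) (tr x).
Proof. by move=> y; apply: val_inj => /=; rewrite conjgK. Qed.

Lemma ctr_idem x : tr x x = x.
Proof. by apply: val_inj => /=; rewrite conjgE invgK mulgV mulg1. Qed.

Lemma conjVg_braid (x y : G) : ((y ^ x^-1) ^ y^-1 == x) = (y * x * y == x * y * x).
Proof. by rewrite !conjgE !invgK !mulgA !(can2_eq (mulgVK _) (mulgK _)). Qed.

Lemma ctr_braid_sym a b : (tr b (tr a b) == a) = (tr a (tr b a) == b).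
Proof. by rewrite -!val_eqE /= !conjVg_braid eq_sym. Qed.

End ConjugationRack.

Section NonBraidedPair.
Variables (k : fieldType) (X : choiceType) (tr : X -> X -> X) (q : X -> X -> k).
Variable tr_inv : X -> X -> X.
Hypothesis tr_sd : forall x y z, tr x (tr y z) = tr (tr x y) (tr x z).
Hypothesis trK : forall x, cancel (tr x) (tr_inv x).
Hypothesis tr_invK : forall x, cancel (tr_inv x) (tr x).
Hypothesis q_cocycle : forall x y z,
  q (tr x y) (tr x z) * q x z = q x (tr y z) * q y z.
Hypothesis q_neq0 : forall x y, q x y != 0.
Hypothesis tr_idem : forall x, tr x x = x.
Variables a b : X.
Hypothesis ab_neq : tr a b != b.
Hypothesis bab_neq : tr b (tr a b) != a.
Local Notation TV := (TV k X).
Local Notation vw := (@vw k X).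
Local Notation shw := (shw tr q).
Local Notation shuf := (shuf tr q).
Local Notation nichols := (nichols tr q).
Implicit Types (s t : TV) (u w : seq X).

Let d := tr a b.
Let e := tr d a.

Definition xab : TV := shuf (vw [:: a]) (vw [:: b]) - q a b *: shuf (vw [:: d]) (vw [:: a]).

Lemma xabE : xab = vw [:: a; b] - (q a b * q d a) *: vw [:: e; d].
Proof. by rewrite /xab !shuf_vw !shw1 scalerDr scalerA opprD addrA addrK. Qed.

Lemma mcoeff_xab w : xab@_w = ([:: a; b] == w)%:R - q a b * q d a * ([:: e; d] == w)%:R.
Proof. by rewrite xabE mcoeffB mcoeffZ !mcoeff_vw. Qed.

Lemma nichols_xab : nichols xab.
Proof.
rewrite /xab -scaleNr; apply: nich_add; first exact/nich_mul/nich_gen/nich_gen.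
exact/nich_scale/nich_mul/nich_gen/nich_gen.
Qed.

Lemma homog_xab : homog 2 xab.
Proof.
move=> w w2; rewrite mcoeff_xab.
have [abw|_] := eqVneq [:: a; b] w; first by rewrite -abw in w2.
have [edw|_] := eqVneq [:: e; d] w; first by rewrite -edw in w2.
by rewrite mulr0 subr0.
Qed.

Lemma a_neq_b : a != b.
Proof. by apply: contra ab_neq => /eqP <-; rewrite tr_idem. Qed.

Lemma a_neq_d : a != d.
Proof.
apply: contra a_neq_b => /eqP ad; apply/eqP/(can_inj (trK a)).
by rewrite tr_idem {1}ad.
Qed.

Lemma is_coproduct_xab : is_coproduct xab
  [:: (xab, vw [::]); (vw [::], xab); (vw [:: a], vw [:: b]);
      (- (q a b * q d a) *: vw [:: e], vw [:: d])].
Proof.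
move=> w1 w2; rewrite !big_cons big_nil /= !mcoeff_xab !mcoeffZ !mcoeff_vw !natr_eq_cat2.
ring.
Qed.

(* No element of the subalgebra generated by v_b and v_d involves the word ab:
   a is neither b nor d, and b |> b, b |> d differ from a. *)
Definition avoids_ab t :=
  t@_[:: a; b] = 0 /\ forall f, f != b -> f != d -> t@_[:: f] = 0.

Lemma mcoeff_shw1_ab x y : x \in [:: b; d] -> y \in [:: b; d] ->
  (shw [:: x] [:: y])@_[:: a; b] = 0.
Proof.
rewrite !inE => xbd ybd; rewrite shw1 mcoeffD mcoeffZ !mcoeff_vw !eqseq_cons !andbT.
have -> : x == a = false.
  by case/orP: xbd => /eqP ->; apply/negbTE; rewrite eq_sym ?a_neq_b ?a_neq_d.
have [->|] := eqVneq x b; last by rewrite andbF mulr0 add0r.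
have -> : tr b y == a = false.
  by case/orP: ybd => /eqP ->; apply/negbTE; [rewrite tr_idem eq_sym a_neq_b | exact: bab_neq].
by rewrite mulr0 addr0.
Qed.

Lemma avoids_ab_shuf s t : avoids_ab s -> avoids_ab t -> avoids_ab (shuf s t).
Proof.
move=> [s_ab s1] [t_ab t1].
have letter_bd (c : TV) x : (forall f, f != b -> f != d -> c@_[:: f] = 0) ->
    c@_[:: x] != 0 -> x \in [:: b; d].
  by move=> c1; apply: contraR; rewrite !inE negb_or => /andP[xb xd]; rewrite c1.
split.
  apply: mcoeff_shuf_eq0 => u w.
  have [->|nz] := eqVneq ((shw u w)@_[:: a; b]) 0; first by rewrite mulr0.
  move: (size_shw nz) => /eqP.
  case: u nz => [|x [|x' [|? ?]]] nz; case: w nz => [|y [|y' [|? ?]]] nz //= _.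
  - rewrite shw_nill mcoeff_vw; case: eqP => [->|]; last by rewrite mulr0.
    by rewrite t_ab mulr0 mul0r.
  - have [->|sx] := eqVneq (s@_[:: x]) 0; first by rewrite !mul0r.
    have [->|ty] := eqVneq (t@_[:: y]) 0; first by rewrite mulr0 mul0r.
    by rewrite mcoeff_shw1_ab ?mulr0 //; [apply: letter_bd sx | apply: letter_bd ty].
  - rewrite shw_nilr mcoeff_vw; case: eqP => [->|]; last by rewrite mulr0.
    by rewrite s_ab !mul0r.
move=> f fb fd; apply: mcoeff_shuf_eq0 => u w.
have [->|nz] := eqVneq ((shw u w)@_[:: f]) 0; first by rewrite mulr0.
move: (size_shw nz) => /eqP.
case: u nz => [|x [|? ?]] nz; case: w nz => [|y [|? ?]] nz //= _.
- rewrite shw_nill mcoeff_vw; case: eqP => [->|]; last by rewrite mulr0.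
  by rewrite t1 // mulr0 mul0r.
- rewrite shw_nilr mcoeff_vw; case: eqP => [->|]; last by rewrite mulr0.
  by rewrite s1 // !mul0r.
Qed.

Definition Cbd := gen_subalg tr q (eq^~ (vw [:: b])) (vw [:: d]).

Lemma avoids_ab_Cbd c : Cbd c -> avoids_ab c.
Proof.
have size_neq (w w' : seq X) : size w != size w' -> (w == w') = false.
  by apply: contraNF => /eqP ->.
elim=> [_ ->| | |s t _ [s_ab s1] _ [t_ab t1]|z s _ [s_ab s1]|s t _ cs _ ct].
- split; first by rewrite mcoeff_vw size_neq.
  by move=> f fb _; rewrite mcoeff_vw eqseq_cons andbT eq_sym (negbTE fb).
- split; first by rewrite mcoeff_vw size_neq.
  by move=> f _ fd; rewrite mcoeff_vw eqseq_cons andbT eq_sym (negbTE fd).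
- by split => [|f _ _]; rewrite mcoeff_vw size_neq.
- split; first by rewrite mcoeffD s_ab t_ab addr0.
  by move=> f fb fd; rewrite mcoeffD s1 // t1 // addr0.
- split; first by rewrite mcoeffZ s_ab mulr0.
  by move=> f fb fd; rewrite mcoeffZ s1 // mulr0.
- exact: avoids_ab_shuf.
Qed.

Lemma xab_notin_Cbd : ~ Cbd xab.
Proof.
move/avoids_ab_Cbd => [/eqP]; rewrite mcoeff_xab eqxx.
by rewrite !eqseq_cons (negbTE (ab_neq : d != b)) !andbF mulr0 subr0 oner_eq0.
Qed.

Lemma GX_eq_ab_ed : GX_eq tr [:: a; b] [:: e; d].
Proof. by move=> H m e0 i mA m1 m1r mV mVr phi rel /=; rewrite !m1r rel rel. Qed.

Lemma is_homog_xab (E : seq X -> seq X -> Prop) :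
  E [:: a; b] [:: a; b] -> E [:: a; b] [:: e; d] -> is_homog E xab [:: a; b].
Proof.
move=> Eab Eed w; rewrite mcoeff_xab.
have [<- //|_] := eqVneq [:: a; b] w; have [<- //|_] := eqVneq [:: e; d] w.
by rewrite mulr0 subr0 eqxx.
Qed.

Lemma admissible_Cbd c : Cbd c -> admissible tr q Cbd c.
Proof.
have D1 : Cbd (vw [::]) by apply: gen_one.
apply: (admissible_gen_subalg tr_sd trK tr_invK q_cocycle q_neq0) => [_ /= ->|];
  apply: admissible_vw1 => //; [exact: gen_in | exact: gen_x].
Qed.

Lemma admissible_xab : admissible tr q (gen_subalg tr q Cbd xab) xab.
Proof.
set D := gen_subalg _ _ _ _.
have Dx : D xab by apply: gen_x.
have D1 : D (vw [::]) by apply: gen_one.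
have Db : D (vw [:: b]) by apply/gen_in/gen_in.
have Dd : D (vw [:: d]) by apply/gen_in/gen_x.
split; first exact: nichols_xab.
- exact: homog_sum_homog Dx (is_homog_xab _ _).
- exact: homog_sum_homog Dx (is_homog_xab (@GX_eq_refl _ _ _) GX_eq_ab_ed).
exists [:: (xab, vw [::]); (vw [::], xab); (vw [:: a], vw [:: b]);
      (- (q a b * q d a) *: vw [:: e], vw [:: d])].
split; last exact: is_coproduct_xab.
move=> p; rewrite !inE => /or4P[] /eqP -> /=.
- by split; [exact: nichols_xab | exact: D1].
- by split; [exact: nich_one | exact: Dx].
- by split; [exact: nich_gen | exact: Db].
- by split; [exact/nich_scale/nich_gen | exact: Dd].
Qed.

Theorem extendable_in_degree2 : exists C, lcsa tr q C /\ extendable_in_degree tr q C 2.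
Proof.
have lcsa_Cbd : lcsa tr q Cbd.
  apply: (lcsa_gen_subalg tr_sd trK tr_invK q_cocycle q_neq0 _ _ a) => [_ /= ->|];
    apply: admissible_Cbd; [exact: gen_in | exact: gen_x].
exists Cbd; split => //; exists xab; split.
- exact: nichols_xab.
- exact: homog_xab.
- exact: xab_notin_Cbd.
apply: (lcsa_gen_subalg tr_sd trK tr_invK q_cocycle q_neq0 _ admissible_xab a).
by move=> c /admissible_Cbd; apply: admissible_sub => t; apply: gen_in.
Qed.

End NonBraidedPair.

Theorem mainTheorem10 (k : closedFieldType) (hk : [pchar k]%R =i pred0)
  (G : groupType) (Xp : pred G) (hX : conj_closed Xp)
  (q : crack Xp -> crack Xp -> k) :
  two_cocycle (ctr hX) q ->
  ~ braided_rack (ctr hX) ->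
  exists C : TV k (crack Xp) -> Prop,
    lcsa (ctr hX) q C /\ extendable_in_degree (ctr hX) q C 2.
Proof.
move=> [q_neq0 q_cocycle] not_braided.
have [a [b [ab_neq aba_neq]]] :
    exists a b, ctr hX a b != b /\ ctr hX a (ctr hX b a) != b.
  apply: NNPP => no_pair; apply: not_braided; split => [|x y]; first exact: ctr_idem.
  apply: NNPP => xy; apply: no_pair; exists x, y.
  by split; apply/eqP => xyE; apply: xy; [left | right].
apply: (extendable_in_degree2 (ctr_sd hX) (ctrK hX) (ctr_invK hX) q_cocycle q_neq0
          (ctr_idem hX) ab_neq).
by rewrite ctr_braid_sym.
Qed.
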